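(* Let $\mathcal{E}_1=[\theta_1,u_1]$, $\mathcal{E}_2=[\theta_2,u_2]$ be interval effect algebras with order-determining sets of states. Let $\Omega$ be a finite set, $n\ge1$, and for $i=1,\dots,n$ let $A_i=\{A_{ix}:x\in\Omega\}$ be an observable on $\mathcal{E}_1$, $\beta_{ix}\in\mathcal{S}(\mathcal{E}_2)$ for $x\in\Omega$, and $\lambda_i\in[0,1]$ with $\sum_i\lambda_i=1$. Define, for $x\in\Omega$ and $\alpha\in\mathcal{S}(\mathcal{E}_1)$, $\mathcal{I}_x(\alpha)=\sum_i\lambda_i\alpha(A_{ix})\beta_{ix}$. Then: (i) $\mathcal{I}=\{\mathcal{I}_x:x\in\Omega\}$ is an instrument from $\mathcal{E}_1$ to $\mathcal{E}_2$; (ii) for $\alpha\in\mathcal{S}(\mathcal{E}_1)$, setting $\alpha_i=\sum_x\alpha(A_{ix})\beta_{ix}$, we have $\alpha_i\in\mathcal{S}(\mathcal{E}_2)$ and $\overline{\mathcal{I}}(\alpha)=\sum_x\mathcal{I}_x(\alpha)=\sum_i\lambda_i\alpha_i\in\mathcal{S}(\mathcal{E}_2)$; (iii) $\widehat{\mathcal{I}}=\sum_i\lambda_iA_i$, i.e. for each $x\in\Omega$, $\sum_i\lambda_iA_{ix}\in\mathcal{E}_1$ and $\alpha(\sum_i\lambda_iA_{ix})=\mathcal{I}_x(\alpha)(u_2)$ for all $\alpha\in\mathcal{S}(\mathcal{E}_1)$.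
   Context: Let $V$ be a real vector space with zero $\theta$ and $K\subseteq V$ a positive cone ($\mathbb{R}^+K\subseteq K$, $K+K\subseteq K$, $K\cap(-K)=\{\theta\}$), ordered by $x\le y$ iff $y-x\in K$. For $u\in K$, $u\neq\theta$, the interval effect algebra is $\mathcal{E}=[\theta,u]=\{x\in K:x\le u\}$; $a\perp b$ means $a+b\le u$. A state is $s\colon\mathcal{E}\to[0,1]$ with $s(u)=1$ and $s(a+b)=s(a)+s(b)$ when $a\perp b$; $\mathcal{S}(\mathcal{E})$ is the set of all states, assumed order-determining ($a\le b$ iff $s(a)\le s(b)$ for all states $s$). Affine = preserves finite convex combinations. A substate is $\lambda s$, $\lambda\in[0,1]$, $s$ a state. An operation from $\mathcal{E}_1$ to $\mathcal{E}_2$ is an affine map from $\mathcal{S}(\mathcal{E}_1)$ to substates on $\mathcal{E}_2$; a channel is an operation with values in $\mathcal{S}(\mathcal{E}_2)$. An observable on $\mathcal{E}$ is a finite family $\{A_x:x\in\Omega\}\subseteq\mathcal{E}$ with $\sum_xA_x=u$. An instrument from $\mathcal{E}_1$ to $\mathcal{E}_2$ is a finite family $\{\mathcal{I}_x\}$ of operations whose pointwise sum $\overline{\mathcal{I}}=\sum_x\mathcal{I}_x$ is a channel; $\widehat{\mathcal{I}}_x$ denotes the (unique, by order-determination) effect in $\mathcal{E}_1$ with $\alpha(\widehat{\mathcal{I}}_x)=\mathcal{I}_x(\alpha)(u_2)$ for all $\alpha\in\mathcal{S}(\mathcal{E}_1)$, and $\widehat{\mathcal{I}}=\{\widehat{\mathcal{I}}_x\}$.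 (The instrument $\mathcal{I}$ in the claim is called a mixed Holevo instrument.) *)

From HB Require Import structures.
From mathcomp Require Import all_boot all_order all_algebra.
From mathcomp Require Import reals.
Set Implicit Arguments. Unset Strict Implicit. Unset Printing Implicit Defensive.
Import Order.TTheory GRing.Theory Num.Theory.
Local Open Scope ring_scope.

Section Defs.
Variables (R : realType) (V : lmodType R).

Definition is_pos_cone (K : V -> Prop) : Prop :=
  [/\ (forall (r : R) x, 0 <= r -> K x -> K (r *: x)),
      (forall x y, K x -> K y -> K (x + y)) &
      (forall x, K x -> K (- x) -> x = 0)].

Definition cle (K : V -> Prop) (x y : V) : Prop := K (y - x).

Definition effect (K : V -> Prop) (u : V) (x : V) : Prop := K x /\ cle K x u.

(* a state on [theta,u]; represented by a function on V whose values
   outside [theta,u] are irrelevant *)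
Definition is_state (K : V -> Prop) (u : V) (s : V -> R) : Prop :=
  [/\ (forall a, effect K u a -> 0 <= s a <= 1),
      s u = 1 &
      (forall a b, effect K u a -> effect K u b -> cle K (a + b) u ->
         s (a + b) = s a + s b)].

(* two functions represent the same state/substate: agree on [theta,u] *)
Definition eq_on_E (K : V -> Prop) (u : V) (f g : V -> R) : Prop :=
  forall a, effect K u a -> f a = g a.

Definition is_substate (K : V -> Prop) (u : V) (f : V -> R) : Prop :=
  exists (l : R) (s : V -> R), [/\ 0 <= l <= 1, is_state K u s &
     eq_on_E K u f (fun a => l * s a)].

Definition order_determining (K : V -> Prop) (u : V) : Prop :=
  forall a b, effect K u a -> effect K u b ->
    (cle K a b <-> (forall s, is_state K u s -> s a <= s b)).

Definition is_observable (Omega : finType) (K : V -> Prop) (u : V)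
  (A : Omega -> V) : Prop :=
  (forall x, effect K u (A x)) /\ \sum_(x : Omega) A x = u.
End Defs.

Section Ops.
Variables (R : realType) (V1 V2 : lmodType R).
Variables (K1 : V1 -> Prop) (u1 : V1) (K2 : V2 -> Prop) (u2 : V2).

Definition is_operation (I : (V1 -> R) -> (V2 -> R)) : Prop :=
  [/\ (forall al, is_state K1 u1 al -> is_substate K2 u2 (I al)),
      (forall al al', is_state K1 u1 al -> is_state K1 u1 al' ->
          eq_on_E K1 u1 al al' -> eq_on_E K2 u2 (I al) (I al')) &
      (forall (m : nat) (w : 'I_m -> R) (s : 'I_m -> V1 -> R),
          (forall j, 0 <= w j) -> \sum_j w j = 1 ->
          (forall j, is_state K1 u1 (s j)) ->
          eq_on_E K2 u2 (I (fun a => \sum_j w j * s j a))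
                        (fun b => \sum_j w j * I (s j) b))].

Definition is_channel (I : (V1 -> R) -> (V2 -> R)) : Prop :=
  is_operation I /\ (forall al, is_state K1 u1 al -> is_state K2 u2 (I al)).

Definition is_instrument (Omega : finType)
  (I : Omega -> (V1 -> R) -> (V2 -> R)) : Prop :=
  (forall x, is_operation (I x)) /\
  is_channel (fun al b => \sum_(x : Omega) I x al b).
End Ops.

(* Each [I x] has the measure-and-prepare form [al |-> sum_i lam_i al(A_ix) beta_ix]:
   a subconvex combination of states with weights affine in [al], hence an operation.
   Summing over [x] regroups it as [sum_i lam_i al_i], where [al_i] is a convex
   combination of the [beta_ix] because [sum_x al(A_ix) = al(u1) = 1].  Part (iii)
   needs [al(sum_i lam_i A_ix) = sum_i lam_i al(A_ix)], i.e. states are homogeneous on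
   effects; this follows from finite additivity alone, since [r |-> al(r a)] is
   additive and nonnegative on [0, 1], hence linear by an Archimedean squeeze. *)

From HB Require Import structures.
From mathcomp Require Import all_boot all_order all_algebra.
From mathcomp Require Import reals.
From mathcomp Require Import ring lra.
Import Order.TTheory GRing.Theory Num.Theory.
Set Implicit Arguments. Unset Strict Implicit. Unset Printing Implicit Defensive.
Local Open Scope ring_scope.

Lemma le_of_forall_le_addn (R : archiRealFieldType) (x y c : R) :
  (forall N : nat, x <= y + c / N.+1%:R) -> x <= y.
Proof.
move=> hxy; apply/ler_addgt0Pr => e e_gt0.
set N := Num.truncn (c / e).
have N_gt0 : 0 < N.+1%:R :> R by rewrite ltr0n.
apply: (le_trans (hxy N)); rewrite lerD2l ler_pdivrMr //.
by rewrite mulrC -ler_pdivrMr // ltW // truncnS_gt.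
Qed.

Section UnitIntervalAdditive.
Variables (R : archiRealFieldType) (f : R -> R).
Hypothesis f_ge0 : forall r, 0 <= r <= 1 -> 0 <= f r.
Hypothesis fD : forall r t, 0 <= r -> 0 <= t -> r + t <= 1 -> f (r + t) = f r + f t.

Lemma additive_f0 : f 0 = 0.
Proof.
have := fD (lexx 0) (lexx 0); rewrite addr0 ler01 => /(_ isT); lra.
Qed.

Lemma additive_fMn t k : 0 <= t -> t *+ k <= 1 -> f (t *+ k) = f t *+ k.
Proof.
move=> t_ge0; elim: k => [|k IH] tk_le1; first by rewrite !mulr0n additive_f0.
have tk_ge0 : 0 <= t *+ k by rewrite mulrn_wge0.
rewrite mulrSr in tk_le1 *; rewrite fD // IH ?mulrSr //.
by apply: le_trans tk_le1; rewrite lerDl.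
Qed.

Lemma additive_homo_le r t : 0 <= r -> r <= t -> t <= 1 -> f r <= f t.
Proof.
move=> r_ge0 rt t_le1; rewrite -(subrKC r t) fD ?subr_ge0 ?subrKC //.
by rewrite lerDl f_ge0 // subr_ge0 rt /=; lra.
Qed.

Lemma additive_lower_bound r N : 0 <= r <= 1 -> r * f 1 - f 1 / N.+1%:R <= f r.
Proof.
move=> /andP[r_ge0 r_le1].
have N_gt0 : 0 < N.+1%:R :> R by rewrite ltr0n.
set d := N.+1%:R^-1.
have d_ge0 : 0 <= d by rewrite invr_ge0 ltW.
have dN : d *+ N.+1 = 1 by rewrite -mulr_natr mulVf ?gt_eqF.
have f1 : f 1 = f d *+ N.+1 by rewrite -dN additive_fMn ?dN.
have f1_ge0 : 0 <= f 1 by rewrite f_ge0 ?ler01 ?lexx.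
set k := Num.truncn (r * N.+1%:R).
have /andP[k_le k_gt] := truncn_itv (mulr_ge0 r_ge0 (ltW N_gt0)).
rewrite -/k in k_le k_gt.
have dk_le_r : d *+ k <= r by rewrite -mulr_natl ler_pdivrMr // mulrC.
have r_le : r <= d *+ k + d.
  by rewrite -mulrSr -mulr_natl ler_pdivlMr // ltW.
apply: le_trans _ (additive_homo_le (mulrn_wge0 k d_ge0) dk_le_r r_le1).
rewrite additive_fMn // ?(le_trans dk_le_r) //.
have fd : f d = f 1 * d.
  by rewrite f1 -mulr_natr -mulrA mulfV ?gt_eqF // mulr1.
have := ler_wpM2l f1_ge0 r_le; rewrite fd mulrDr -mulrnAr; lra.
Qed.

Lemma additive_linear r : 0 <= r <= 1 -> f r = r * f 1.
Proof.
move=> r01; have r'01 : 0 <= 1 - r <= 1.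
  by move: r01 => /andP[? ?]; apply/andP; lra.
have split1 : f r + f (1 - r) = f 1.
  by move: r01 => /andP[? ?]; rewrite -fD ?subrKC // subr_ge0.
apply/eqP; rewrite eq_le; apply/andP; split;
  apply: (@le_of_forall_le_addn _ _ _ (f 1)) => N; set e := f 1 / _.
- by have := additive_lower_bound N r'01; rewrite -/e mulrBl mul1r; lra.
- by have := additive_lower_bound N r01; rewrite -/e; lra.
Qed.
End UnitIntervalAdditive.

Section IntervalEffectAlgebra.
Variables (R : realType) (V : lmodType R) (K : V -> Prop) (u : V).
Hypotheses (hK : is_pos_cone K) (huK : K u).

Lemma cone_scale r x : 0 <= r -> K x -> K (r *: x).
Proof. by case: hK => hZ _ _; apply: hZ. Qed.

Lemma cone_add x y : K x -> K y -> K (x + y).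
Proof. by case: hK => _ hD _; apply: hD. Qed.

Lemma cone0 : K 0.
Proof. by rewrite -(scale0r u); apply: cone_scale. Qed.

Lemma cone_sum (I : Type) (r : seq I) (P : pred I) (e : I -> V) :
  (forall j, P j -> K (e j)) -> K (\sum_(j <- r | P j) e j).
Proof. by move=> he; elim/big_ind: _ => //; [exact: cone0 | exact: cone_add]. Qed.

Lemma cle_of_addr x y : K y -> cle K (x + y) u -> cle K x u.
Proof.
rewrite /cle => Ky hxy; have -> : u - x = u - (x + y) + y by rewrite opprD addrA subrK.
exact: cone_add.
Qed.

Lemma effect0 : effect K u 0.
Proof. by split; [exact: cone0 | rewrite /cle subr0]. Qed.

Lemma effectZ r a : 0 <= r <= 1 -> effect K u a -> effect K u (r *: a).
Proof.
move=> /andP[r_ge0 r_le1] [Ka cle_a]; split; first exact: cone_scale.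
rewrite /cle -(subrK a u) -{2}(scale1r a) -addrA -scalerBl addrC.
by apply: cone_add => //; apply: cone_scale; rewrite ?subr_ge0.
Qed.

Lemma effect_subconv (I : finType) (c : I -> R) (a : I -> V) :
  (forall i, 0 <= c i) -> \sum_i c i <= 1 -> (forall i, effect K u (a i)) ->
  effect K u (\sum_i c i *: a i).
Proof.
move=> c_ge0 c_le1 ha; split.
  by apply: cone_sum => i _; apply: cone_scale => //; case: (ha i).
rewrite /cle; have -> : u - \sum_i c i *: a i = (1 - \sum_i c i) *: u + \sum_i c i *: (u - a i).
  rewrite [X in _ = _ + X](eq_bigr (fun i => c i *: u - c i *: a i)) => [|i _].
    by rewrite sumrB scalerBl scale1r scaler_suml addrA subrK.
  by rewrite scalerBr.
apply: cone_add; first by apply: cone_scale; rewrite ?subr_ge0.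
by apply: cone_sum => i _; apply: cone_scale => //; case: (ha i).
Qed.

Section State.
Variable s : V -> R.
Hypothesis hs : is_state K u s.

Lemma state01 a : effect K u a -> 0 <= s a <= 1.
Proof. by case: hs => h _ _; apply: h. Qed.

Lemma stateD a b : effect K u a -> effect K u b -> cle K (a + b) u ->
  s (a + b) = s a + s b.
Proof. by case: hs => _ _; apply. Qed.

Lemma state0 : s 0 = 0.
Proof.
have := stateD effect0 effect0; rewrite addr0 /cle subr0 => /(_ huK); lra.
Qed.

Lemma state_sum (I : Type) (r : seq I) (e : I -> V) :
  (forall j, K (e j)) -> cle K (\sum_(j <- r) e j) u ->
  s (\sum_(j <- r) e j) = \sum_(j <- r) s (e j).
Proof.
move=> Ke; elim: r => [|j r IH]; first by rewrite !big_nil state0.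
rewrite !big_cons => hc; have Kr : K (\sum_(k <- r) e k) by apply: cone_sum.
have cle_r : cle K (\sum_(k <- r) e k) u by apply: (cle_of_addr (Ke j)); rewrite addrC.
by rewrite stateD ?IH //; split=> //; apply: cle_of_addr hc.
Qed.

Lemma stateZ r a : 0 <= r <= 1 -> effect K u a -> s (r *: a) = r * s a.
Proof.
move=> r01 ha; rewrite -{2}(scale1r a).
apply: (additive_linear (f := fun r => s (r *: a))) => //.
  by move=> t t01; case/andP: (state01 (effectZ t01 ha)).
move=> t t' t_ge0 t'_ge0 tt'_le1.
have t01 : 0 <= t <= 1 by apply/andP; lra.
have t'01 : 0 <= t' <= 1 by apply/andP; lra.
have tt'01 : 0 <= t + t' <= 1 by apply/andP; lra.
have hta := effectZ t01 ha; have ht'a := effectZ t'01 ha.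
by rewrite scalerDl stateD // -scalerDl; case: (effectZ tt'01 ha).
Qed.

Lemma state_subconv (I : finType) (c : I -> R) (a : I -> V) :
  (forall i, 0 <= c i) -> \sum_i c i <= 1 -> (forall i, effect K u (a i)) ->
  s (\sum_i c i *: a i) = \sum_i c i * s (a i).
Proof.
move=> c_ge0 c_le1 ha.
have c01 i : 0 <= c i <= 1.
  rewrite c_ge0 /=; apply: le_trans c_le1.
  by rewrite (bigD1 i) //= lerDl; apply: sumr_ge0.
rewrite state_sum => [|i|]; first by apply: eq_bigr => i _; rewrite stateZ.
- by apply: cone_scale => //; case: (ha i).
- by case: (effect_subconv c_ge0 c_le1 ha).
Qed.

Lemma state_observable (Omega : finType) (A : Omega -> V) :
  is_observable K u A -> \sum_x s (A x) = 1.
Proof.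
case=> hA sumA; rewrite -state_sum => [|x|].
- by rewrite sumA; case: hs.
- by case: (hA x).
- by rewrite sumA /cle subrr; apply: cone0.
Qed.
End State.

Lemma eq_is_state (f g : V -> R) : f =1 g -> is_state K u f -> is_state K u g.
Proof.
move=> e [h01 h1 hD]; split.
- by move=> a ha; rewrite -e; apply: h01.
- by rewrite -e.
- by move=> a b ha hb hab; rewrite -!e; apply: hD.
Qed.

Lemma conv_state (I : finType) (w : I -> R) (t : I -> V -> R) :
  (forall i, 0 <= w i) -> \sum_i w i = 1 -> (forall i, is_state K u (t i)) ->
  is_state K u (fun b => \sum_i w i * t i b).
Proof.
move=> w_ge0 w1 ht; split.
- move=> a ha; apply/andP; split.
    by apply: sumr_ge0 => i _; case/andP: (state01 (ht i) ha) => ? _; apply: mulr_ge0.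
  rewrite -w1; apply: ler_sum => i _; case/andP: (state01 (ht i) ha) => _ ?.
  by rewrite -[leRHS]mulr1 ler_wpM2l.
- by rewrite -w1; apply: eq_bigr => i _; case: (ht i) => _ -> _; rewrite mulr1.
- move=> a b ha hb hab; rewrite -big_split /=; apply: eq_bigr => i _.
  by rewrite (stateD (ht i)) // mulrDr.
Qed.

Lemma state_substate (t : V -> R) : is_state K u t -> is_substate K u t.
Proof. by exists 1, t; split; rewrite ?ler01 ?lexx // => a _; rewrite mul1r. Qed.

(* [i0] only supplies a state for the case of total weight zero. *)
Lemma subconv_substate (I : finType) (i0 : I) (w : I -> R) (t : I -> V -> R) :
  (forall i, 0 <= w i) -> \sum_i w i <= 1 -> (forall i, is_state K u (t i)) ->
  is_substate K u (fun b => \sum_i w i * t i b).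
Proof.
move=> w_ge0 w_le1 ht; set W := \sum_i w i.
have W_ge0 : 0 <= W by apply: sumr_ge0.
have [W0|W_neq0] := eqVneq W 0.
  exists 0, (t i0); split; rewrite ?lexx ?ler01 // => a _.
  by rewrite mul0r big1 // => i _; move/psumr_eq0P: W0 => ->; rewrite ?mul0r.
exists W, (fun b => \sum_i (w i / W) * t i b); split; rewrite ?W_ge0 //.
  by apply: conv_state => // [i|]; rewrite ?divr_ge0 // -mulr_suml divff.
move=> a _; rewrite mulr_sumr; apply: eq_bigr => i _.
by rewrite mulrA mulrCA divff // mulr1.
Qed.
End IntervalEffectAlgebra.

Section Operations.
Variables (R : realType) (V1 V2 : lmodType R).
Variables (K1 : V1 -> Prop) (u1 : V1) (K2 : V2 -> Prop) (u2 : V2).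

Lemma measure_prepare_operation (I : finType) (i0 : I) (c : I -> R) (a : I -> V1)
    (beta : I -> V2 -> R) :
  (forall i, 0 <= c i) -> \sum_i c i <= 1 -> (forall i, effect K1 u1 (a i)) ->
  (forall i, is_state K2 u2 (beta i)) ->
  is_operation K1 u1 K2 u2 (fun al b => \sum_i c i * al (a i) * beta i b).
Proof.
move=> c_ge0 c_le1 ha hbeta; split.
- move=> al hal; apply: subconv_substate => // [i|].
    by case/andP: (state01 hal (ha i)) => ? _; apply: mulr_ge0.
  apply: le_trans c_le1; apply: ler_sum => i _.
  by case/andP: (state01 hal (ha i)) => _ ?; rewrite ler_piMr.
- by move=> al al' _ _ e b _; apply: eq_bigr => i _; rewrite e.
- move=> m w s _ _ _ b _; under eq_bigr do rewrite mulr_sumr mulr_suml.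
  rewrite exchange_big /=; apply: eq_bigr => j _.
  by rewrite mulr_sumr; apply: eq_bigr => i _; ring.
Qed.

Lemma instrument_of_operations (Omega : finType) (I : Omega -> (V1 -> R) -> (V2 -> R)) :
  (forall x, is_operation K1 u1 K2 u2 (I x)) ->
  (forall al, is_state K1 u1 al -> is_state K2 u2 (fun b => \sum_x I x al b)) ->
  is_instrument K1 u1 K2 u2 I.
Proof.
move=> hI hsum; split=> //; split=> //; split.
- by move=> al hal; apply: state_substate; apply: hsum.
- move=> al al' hal hal' e b hb; apply: eq_bigr => x _.
  by case: (hI x) => _ hwd _; apply: hwd.
- move=> m w s w_ge0 w1 hs b hb /=.
  under eq_bigr => x _ do case: (hI x) => _ _ /(_ m w s w_ge0 w1 hs b hb) ->.
  by rewrite exchange_big /=; apply: eq_bigr => j _; rewrite mulr_sumr.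
Qed.
End Operations.

Theorem theorem4p1 (R : realType) (V1 V2 : lmodType R)
  (K1 : V1 -> Prop) (u1 : V1) (K2 : V2 -> Prop) (u2 : V2)
  (hK1 : is_pos_cone K1) (hu1K : K1 u1) (hu1 : u1 <> 0)
  (hK2 : is_pos_cone K2) (hu2K : K2 u2) (hu2 : u2 <> 0)
  (hod1 : order_determining K1 u1) (hod2 : order_determining K2 u2)
  (Omega : finType) (n : nat) (hn : (1 <= n)%N)
  (A : 'I_n -> Omega -> V1) (beta : 'I_n -> Omega -> V2 -> R)
  (lam : 'I_n -> R)
  (hA : forall i, is_observable K1 u1 (A i))
  (hbeta : forall i x, is_state K2 u2 (beta i x))
  (hlam : forall i, 0 <= lam i <= 1) (hlam1 : \sum_i lam i = 1) :
  let I := fun (x : Omega) (al : V1 -> R) (b : V2) =>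
             \sum_i lam i * al (A i x) * beta i x b in
  [/\ is_instrument K1 u1 K2 u2 I,
      (forall al, is_state K1 u1 al ->
         let ali := fun i b => \sum_(x : Omega) al (A i x) * beta i x b in
         [/\ forall i, is_state K2 u2 (ali i),
             forall b, \sum_(x : Omega) I x al b = \sum_i lam i * ali i b &
             is_state K2 u2 (fun b => \sum_(x : Omega) I x al b)]) &
      (forall x, effect K1 u1 (\sum_i lam i *: A i x) /\
         forall al, is_state K1 u1 al ->
           al (\sum_i lam i *: A i x) = I x al u2)].
Proof.
move=> I.
have lam_ge0 i : 0 <= lam i by case/andP: (hlam i).
have hAx i x : effect K1 u1 (A i x) by case: (hA i).
have ali_state al : is_state K1 u1 al ->
    forall i, is_state K2 u2 (fun b => \sum_x al (A i x) * beta i x b).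
  move=> hal i; apply: conv_state => // [x|].
    by case/andP: (state01 hal (hAx i x)).
  exact: (state_observable hK1 hu1K hal (hA i)).
have I_sum al b : \sum_x I x al b = \sum_i lam i * \sum_x al (A i x) * beta i x b.
  rewrite exchange_big; apply: eq_bigr => i _.
  by rewrite mulr_sumr; apply: eq_bigr => x _; rewrite mulrA.
have channel_state al : is_state K1 u1 al -> is_state K2 u2 (fun b => \sum_x I x al b).
  move=> hal; apply: (eq_is_state (fun b => esym (I_sum al b))).
  by apply: (conv_state (t := fun i b => \sum_x al (A i x) * beta i x b)) => //; apply: ali_state.
split.
- apply: instrument_of_operations => // x.
  by apply: (measure_prepare_operation (Ordinal hn)); rewrite ?hlam1.
- by move=> al hal; split; [exact: ali_state | exact: I_sum | exact: channel_state].
move=> x; split; first by apply: effect_subconv; rewrite ?hlam1.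
move=> al hal; rewrite (state_subconv hK1 hu1K) ?hlam1 //.
by apply: eq_bigr => i _; case: (hbeta i x) => _ -> _; rewrite mulr1.
Qed.
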